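(* Let $\nabla$ be an ES combination operator satisfying (ESF2), (ESF7) and (ESF8). Then $\nabla$ satisfies (ESF-U).
   Context: Setting: epistemic space $(\mathcal E,B,\mathcal L_{\mathcal P})$ ($\mathcal E$ nonempty, $B:\mathcal E\to$ propositional formulas over finite $\mathcal P$, image modulo equivalence exactly the consistent formulas); agents form a well-ordered set $\mathcal S$; a society is a nonempty finite $N\subseteq\mathcal S$; an $N$-profile is $\Phi:N\to\mathcal E$, $E_i=\Phi(i)$, identified with $E_i$ if $N=\{i\}$; profiles on $\{i_1<\dots<i_n\}$, $\{j_1<\dots<j_m\}$ are equivalent ($\equiv$) if $n=m$ and entries coincide position-wise; $\Phi\upharpoonright_M$ restriction; partition $\{N_1,N_2\}$: nonempty disjoint parts with union $N$. An ES combination operator maps (profile, $E$) to $\nabla(\Phi,E)\in\mathcal E$. (ESF2): if $\Phi\equiv\Phi'$ and $B(E)\equiv B(E')$ then $B(\nabla(\Phi,E))\equiv B(\nabla(\Phi',E'))$. (ESF7): for every partition $\{N_1,N_2\}$ of $N$, $N$-profile $\Phi$, $E$: $B(\nabla(\Phi\upharpoonright_{N_1},E))\wedge B(\nabla(\Phi\upharpoonright_{N_2},E))\vdash B(\nabla(\Phi,E))$. (ESF8): if that conjunction is consistent, then $B(\nabla(\Phi,E))\vdash B(\nabla(\Phi\upharpoonright_{N_1},E))\wedge B(\nabla(\Phi\upharpoonright_{N_2},E))$. (ESF-U): for every society $N$, $N$-profile $\Phi$ and $E$, if $E_i=E_j$ for all $i,j\in N$ then $B(\nabla(\Phi,E))\equiv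 B(\nabla(E_i,E))$ for all $i\in N$. *)

From Stdlib Require Import List Sorted Relations Wellfounded.
Import ListNotations.
Set Implicit Arguments.

Inductive form (P : Type) : Type :=
| FVar : P -> form P
| FTop : form P
| FBot : form P
| FNeg : form P -> form P
| FAnd : form P -> form P -> form P
| FOr  : form P -> form P -> form P
| FImp : form P -> form P -> form P.

Arguments FTop {P}.
Arguments FBot {P}.

Fixpoint sat {P : Type} (v : P -> bool) (f : form P) : bool :=
  match f with
  | FVar x => v x
  | FTop => true
  | FBot => false
  | FNeg g => negb (sat v g)
  | FAnd g h => andb (sat v g) (sat v h)
  | FOr g h => orb (sat v g) (sat v h)
  | FImp g h => orb (negb (sat v g)) (sat v h)
  end.

(** Classical propositional consequence (semantic; equivalent to derivability). *)
Definition entails {P : Type} (f g : form P) : Prop :=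
  forall v : P -> bool, sat v f = true -> sat v g = true.

Definition fequiv {P : Type} (f g : form P) : Prop := entails f g /\ entails g f.

Definition consistent {P : Type} (f : form P) : Prop :=
  exists v : P -> bool, sat v f = true.

Record epistemic_space (P E : Type) (B : E -> form P) : Prop := {
  es_P_finite : exists l : list P, forall x : P, In x l;
  es_E_nonempty : inhabited E;
  es_B_consistent : forall e : E, consistent (B e);
  es_B_onto : forall f : form P, consistent f -> exists e : E, fequiv (B e) f
}.

Record well_order (S : Type) (lt : S -> S -> Prop) : Prop := {
  wo_irrefl : forall x, ~ lt x x;
  wo_trans : forall x y z, lt x y -> lt y z -> lt x z;
  wo_total : forall x y, lt x y \/ x = y \/ lt y x;
  wo_wf : well_founded lt
}.

(** A profile over a society N = {i_1 < ... < i_n} is represented as the list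
    [(i_1, E_{i_1}); ...; (i_n, E_{i_n})], strictly increasing in the agents
    and nonempty.  Its society is [map fst]. *)
Definition profile (S E : Type) := list (S * E).

Definition is_profile {S E : Type} (lt : S -> S -> Prop) (Phi : profile S E) : Prop :=
  Phi <> [] /\ StronglySorted (fun a b => lt (fst a) (fst b)) Phi.

Definition prof_equiv {S E : Type} (Phi Phi' : profile S E) : Prop :=
  map snd Phi = map snd Phi'.

Definition restrict {S E : Type} (p : S -> bool) (Phi : profile S E) : profile S E :=
  filter (fun a => p (fst a)) Phi.

(** A partition {N1, N2} of the society of Phi is given by p : S -> bool,
    N1 = {i in N | p i}, N2 = {i in N | ~ p i}, both nonempty. *)
Definition is_partition {S E : Type} (p : S -> bool) (Phi : profile S E) : Prop :=
  restrict p Phi <> [] /\ restrict (fun i => negb (p i)) Phi <> [].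

(** ES combination operators: nabla Phi E; only its values on genuine
    profiles (is_profile) are constrained. *)

Definition ESF2 {P S E : Type} (lt : S -> S -> Prop) (B : E -> form P)
    (nabla : profile S E -> E -> E) : Prop :=
  forall (Phi Phi' : profile S E) (e e' : E),
    is_profile lt Phi -> is_profile lt Phi' ->
    prof_equiv Phi Phi' -> fequiv (B e) (B e') ->
    fequiv (B (nabla Phi e)) (B (nabla Phi' e')).

Definition ESF7 {P S E : Type} (lt : S -> S -> Prop) (B : E -> form P)
    (nabla : profile S E -> E -> E) : Prop :=
  forall (Phi : profile S E) (p : S -> bool) (e : E),
    is_profile lt Phi -> is_partition p Phi ->
    entails (FAnd (B (nabla (restrict p Phi) e))
                  (B (nabla (restrict (fun i => negb (p i)) Phi) e)))
            (B (nabla Phi e)).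

Definition ESF8 {P S E : Type} (lt : S -> S -> Prop) (B : E -> form P)
    (nabla : profile S E -> E -> E) : Prop :=
  forall (Phi : profile S E) (p : S -> bool) (e : E),
    is_profile lt Phi -> is_partition p Phi ->
    consistent (FAnd (B (nabla (restrict p Phi) e))
                     (B (nabla (restrict (fun i => negb (p i)) Phi) e))) ->
    entails (B (nabla Phi e))
            (FAnd (B (nabla (restrict p Phi) e))
                  (B (nabla (restrict (fun i => negb (p i)) Phi) e))).

(** (ESF-U): unanimity; the single-agent profile {i |-> E_i} is [(i, E_i)]. *)
Definition ESFU {P S E : Type} (lt : S -> S -> Prop) (B : E -> form P)
    (nabla : profile S E -> E -> E) : Prop :=
  forall (Phi : profile S E) (e : E),
    is_profile lt Phi ->
    (forall a b, In a Phi -> In b Phi -> snd a = snd b) ->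
    forall a, In a Phi -> fequiv (B (nabla Phi e)) (B (nabla [a] e)).

(* Induction along a unanimous profile, splitting off its first agent.  By
   (ESF2) every single-agent profile with entry [x] yields the same belief [k],
   and by induction so does the rest of the profile.  Since [k] is consistent,
   (ESF8) applies to the split, and together with (ESF7) the combination over
   the whole profile is equivalent to [k /\ k], i.e. to [k]. *)
From Stdlib Require Import List Sorted ClassicalEpsilon.
Import ListNotations.
Set Implicit Arguments.
Unset Strict Implicit.

Lemma fequiv_refl {P : Type} (f : form P) : fequiv f f.
Proof. split; intros v; exact id. Qed.

Lemma fequiv_split {P : Type} (f g h k : form P) :
  consistent k -> fequiv f k -> fequiv g k ->
  entails (FAnd f g) h -> (consistent (FAnd f g) -> entails h (FAnd f g)) ->
  fequiv h k.
Proof.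
  intros [w Hw] [Hfk Hkf] [Hgk Hkg] Hfgh Hhfg.
  assert (Hkfg : entails k (FAnd f g)).
  { intros v Hv; simpl; rewrite (Hkf v Hv), (Hkg v Hv); reflexivity. }
  split.
  - intros v Hv; apply Hfk.
    assert (Hfg : sat v (FAnd f g) = true).
    { apply Hhfg; [exists w; apply Hkfg, Hw | exact Hv]. }
    simpl in Hfg; apply andb_prop in Hfg; tauto.
  - intros v Hv; apply Hfgh, Hkfg, Hv.
Qed.

Definition agent_eqb {S : Type} (i j : S) : bool :=
  if excluded_middle_informative (j = i) then true else false.

Section HeadSplit.

Variables (S E : Type) (lt : S -> S -> Prop).
Hypothesis lt_irrefl : forall i, ~ lt i i.

Lemma restrict_agent_nil (i : S) (Phi : profile S E) :
  Forall (fun b => lt i (fst b)) Phi -> restrict (agent_eqb i) Phi = [].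
Proof.
  intros Hgt; induction Hgt as [|b Phi Hb _ IH]; [reflexivity|].
  unfold restrict, agent_eqb in *; simpl.
  destruct excluded_middle_informative as [Heq|]; [|exact IH].
  rewrite Heq in Hb; contradiction (lt_irrefl Hb).
Qed.

Lemma restrict_other_agents_id (i : S) (Phi : profile S E) :
  Forall (fun b => lt i (fst b)) Phi ->
  restrict (fun j => negb (agent_eqb i j)) Phi = Phi.
Proof.
  intros Hgt; induction Hgt as [|b Phi Hb _ IH]; [reflexivity|].
  unfold restrict, agent_eqb in *; simpl.
  destruct excluded_middle_informative as [Heq|]; simpl.
  - rewrite Heq in Hb; contradiction (lt_irrefl Hb).
  - f_equal; exact IH.
Qed.

Lemma restrict_agent_head (a : S * E) (Phi : profile S E) :
  Forall (fun b => lt (fst a) (fst b)) Phi ->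
  restrict (agent_eqb (fst a)) (a :: Phi) = [a].
Proof.
  intros Hgt; unfold restrict, agent_eqb; simpl.
  destruct excluded_middle_informative as [_|Hne]; [|contradiction Hne; reflexivity].
  f_equal; exact (restrict_agent_nil Hgt).
Qed.

Lemma restrict_other_agents_head (a : S * E) (Phi : profile S E) :
  Forall (fun b => lt (fst a) (fst b)) Phi ->
  restrict (fun j => negb (agent_eqb (fst a) j)) (a :: Phi) = Phi.
Proof.
  intros Hgt; unfold restrict, agent_eqb; simpl.
  destruct excluded_middle_informative as [_|Hne]; [|contradiction Hne; reflexivity].
  exact (restrict_other_agents_id Hgt).
Qed.

End HeadSplit.

Section Unanimity.

Variables (P S E : Type) (B : E -> form P) (lt : S -> S -> Prop)
  (nabla : profile S E -> E -> E).
Hypotheses (B_consistent : forall e, consistent (B e))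
  (lt_irrefl : forall i, ~ lt i i)
  (H2 : ESF2 lt B nabla) (H7 : ESF7 lt B nabla) (H8 : ESF8 lt B nabla).

Lemma is_profile_singleton (a : S * E) : is_profile lt [a].
Proof. split; [discriminate | repeat constructor]. Qed.

Lemma nabla_singleton_agent (i j : S) (x e : E) :
  fequiv (B (nabla [(i, x)] e)) (B (nabla [(j, x)] e)).
Proof.
  apply H2; auto using is_profile_singleton, fequiv_refl; reflexivity.
Qed.

Lemma nabla_unanimous (i : S) (x e : E) (Phi : profile S E) :
  is_profile lt Phi -> (forall b, In b Phi -> snd b = x) ->
  fequiv (B (nabla Phi e)) (B (nabla [(i, x)] e)).
Proof.
  induction Phi as [|[j y] Phi IH]; intros [Hne Hsorted] Hx; [congruence|].
  assert (Hy : y = x) by (apply (Hx (j, y)); left; reflexivity); subst y.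
  destruct Phi as [|b Phi]; [apply nabla_singleton_agent|].
  inversion Hsorted as [|? ? Hsorted_tl Hgt]; subst.
  pose proof (restrict_agent_head lt_irrefl Hgt) as Hhead.
  pose proof (restrict_other_agents_head lt_irrefl Hgt) as Htail.
  cbn [fst] in Hhead, Htail.
  assert (Hpart : is_partition (agent_eqb j) ((j, x) :: b :: Phi)).
  { unfold is_partition; rewrite Hhead, Htail; split; discriminate. }
  assert (HPhi : is_profile lt ((j, x) :: b :: Phi)) by (split; [discriminate | exact Hsorted]).
  pose proof (H7 (e := e) HPhi Hpart) as Hjoin.
  pose proof (H8 (e := e) HPhi Hpart) as Hmeet.
  rewrite Hhead, Htail in Hjoin, Hmeet.
  refine (fequiv_split (B_consistent _) (nabla_singleton_agent j i x e) _ Hjoin Hmeet).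
  apply IH; [split; [discriminate | exact Hsorted_tl] |].
  intros c Hc; apply Hx; right; exact Hc.
Qed.

End Unanimity.

Theorem mainTheorem8 (P S E : Type) (B : E -> form P) (lt : S -> S -> Prop)
    (nabla : profile S E -> E -> E) :
  epistemic_space B -> well_order lt ->
  ESF2 lt B nabla -> ESF7 lt B nabla -> ESF8 lt B nabla ->
  ESFU lt B nabla.
Proof.
  intros HES HWO H2 H7 H8 Phi e HPhi Hall [i x] Ha.
  apply (nabla_unanimous (es_B_consistent HES) (wo_irrefl HWO) H2 H7 H8); auto.
  intros b Hb; exact (Hall b (i, x) Hb Ha).
Qed.
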